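(* Let $\mathbf x=(x_1,\dots,x_n)\in\mathbb R_{\ge0}^n$, let $B\ge1$ be an integer, and let $\mathbf a=\mathrm{RAS}(\mathbf x;B)$. Then for all $i,j\in[n]$, $$a_jx_j\le(a_i+1)x_i.$$
   Context: $\odot$ is the entrywise product and $\mathbf e_i$ the $i$-th unit vector. RAS$(x_1,\dots,x_n;B)$: relabel indices so that $x_1\le\dots\le x_n$ (the output is returned in the original labeling). If $B=1$ return $\mathbf e_1$. Otherwise let $\mathbf a=\mathrm{RAS}(\mathbf x;B-1)$; let $r=\min\{i:a_i=0\}$ if $a_n=0$, else $r=n$; let $M=\arg\min_{i\in[r]}\|(\mathbf a+\mathbf e_i)\odot\mathbf x\|_\infty$; choose $j\in M$ minimizing the cardinality of $\arg\max_{i\in[r]}(a_i+e_{j,i})x_i$; return $\mathbf a+\mathbf e_j$. *)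

From HB Require Import structures.
From mathcomp Require Import all_boot all_order all_algebra all_fingroup.
Set Implicit Arguments. Unset Strict Implicit. Unset Printing Implicit Defensive.
Import Order.TTheory GRing.Theory Num.Theory.
Local Open Scope ring_scope.

(* Indices are 0-based: paper's index k in [n] is the ordinal of value k-1. *)
Section RAS.
Variables (R : realFieldType) (n : nat).

Definition unitv (j : 'I_n) : 'I_n -> nat := fun i => nat_of_bool (i == j).

Definition unitv1 : 'I_n -> nat := fun i => nat_of_bool (val i == 0%N).

Definition addv (a b : 'I_n -> nat) : 'I_n -> nat := fun i => (a i + b i)%N.

Definition hadam (a : 'I_n -> nat) (x : 'I_n -> R) : 'I_n -> R :=
  fun i => (a i)%:R * x i.

Definition infnorm (v : 'I_n -> R) : R := \big[Num.max/0]_(i : 'I_n) `|v i|.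

(* r (1-based): if a_n = 0 then min{i : a_i = 0}, else n *)
Definition r_of (a : 'I_n -> nat) : nat :=
  if [exists i : 'I_n, (val i == n.-1) && (a i == 0%N)]
  then (find (fun i : 'I_n => a i == 0%N) (enum 'I_n)).+1
  else n.

Definition argmax_r (r : nat) (w : 'I_n -> R) : {set 'I_n} :=
  [set i : 'I_n | (val i < r)%N && [forall k : 'I_n, (val k < r)%N ==> (w k <= w i)]].

Definition in_M (x : 'I_n -> R) (a : 'I_n -> nat) (j : 'I_n) : Prop :=
  (val j < r_of a)%N /\
  forall i : 'I_n, (val i < r_of a)%N ->
    infnorm (hadam (addv a (unitv j)) x) <= infnorm (hadam (addv a (unitv i)) x).

Definition tiecard (x : 'I_n -> R) (a : 'I_n -> nat) (j : 'I_n) : nat :=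
  #|argmax_r (r_of a) (hadam (addv a (unitv j)) x)|.

(* RAS on an already sorted input y (y_1 <= ... <= y_n), as a relation:
   RAS_sorted y B a  <->  a is a possible output of RAS(y;B) under some
   admissible tie-breaking. *)
Inductive RAS_sorted (y : 'I_n -> R) : nat -> ('I_n -> nat) -> Prop :=
| RAS_base : RAS_sorted y 1 unitv1
| RAS_step (B : nat) (a : 'I_n -> nat) (j : 'I_n) :
    RAS_sorted y B a ->
    in_M y a j ->
    (forall j' : 'I_n, in_M y a j' -> (tiecard y a j <= tiecard y a j')%N) ->
    RAS_sorted y B.+1 (addv a (unitv j)).

(* General RAS: relabel so that x is nondecreasing (via a permutation s,
   new index k = old index s k), run, and return in the original labeling. *)
Definition RAS (x : 'I_n -> R) (B : nat) (a : 'I_n -> nat) : Prop :=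
  exists (s : 'S_n) (b : 'I_n -> nat),
    (forall k l : 'I_n, (val k <= val l)%N -> x (s k) <= x (s l)) /\
    RAS_sorted (fun k => x (s k)) B b /\
    (forall k : 'I_n, a (s k) = b k).

End RAS.

From Pilot Require Import Defs.
From HB Require Import structures.
From mathcomp Require Import all_boot all_order all_algebra all_fingroup.
Set Implicit Arguments. Unset Strict Implicit. Unset Printing Implicit Defensive.
Import Order.TTheory GRing.Theory Num.Theory.
Local Open Scope ring_scope.

(* On sorted input y, RAS keeps two invariants: a is balanced,
   a_j y_j <= (a_i + 1) y_i for all i, j, and the zero entries of a form a
   final segment. For balanced a the sup norm of (a + e_i) ⊙ y is attained at
   i and equals (a_i + 1) y_i, so the chosen index j minimizes (a_i + 1) y_i
   over [r]. Past r all entries are zero and y is nondecreasing, so j minimizes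
   (a_i + 1) y_i over all of [n], which is exactly what keeps a + e_j balanced;
   and j never lies beyond the first zero entry, so the zeros stay a final
   segment. *)

Section ZeroSuffix.
Variable n : nat.
Implicit Types (a : 'I_n -> nat) (i j k l : 'I_n).

Definition zeros_suffix a :=
  forall k l, (val k <= val l)%N -> a k = 0%N -> a l = 0%N.

Lemma addv_unitvE a j l : Defs.addv a (unitv j) l = (a l + (l == j))%N.
Proof. by []. Qed.

Let first_zero a := find (fun i : 'I_n => a i == 0%N) (enum 'I_n).

Lemma first_zero_le a k : a k = 0%N -> (first_zero a <= val k)%N.
Proof.
move=> ak; rewrite leqNgt; apply/negP => /(before_find k).
by rewrite nth_ord_enum ak eqxx.
Qed.

Lemma first_zero_ord a k : a k = 0%N ->
  exists2 k0 : 'I_n, val k0 = first_zero a & a k0 = 0%N.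
Proof.
move=> ak; have has0 : has (fun i : 'I_n => a i == 0%N) (enum 'I_n).
  by apply/hasP; exists k; rewrite ?mem_enum ?ak.
exists (nth k (enum 'I_n) (first_zero a)); last exact/eqP/(nth_find k has0).
by apply: nth_enum_ord; rewrite -(size_enum_ord n) -has_find.
Qed.

Lemma r_of_first_zero a k : zeros_suffix a -> a k = 0%N ->
  r_of a = (first_zero a).+1.
Proof.
move=> zs ak; rewrite /r_of; case: ifP => // /negbT /existsPn last_nz.
have n_gt0 : (0 < n)%N by apply: leq_ltn_trans (ltn_ord k).
have last_lt : (n.-1 < n)%N by rewrite ltn_predL.
have := last_nz (Ordinal last_lt); rewrite eqxx /=.
by rewrite (zs k (Ordinal last_lt)) //= -ltnS prednK.
Qed.

Lemma zero_beyond_r a i : zeros_suffix a -> (r_of a <= val i)%N ->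
  exists2 k : 'I_n, (val k < r_of a)%N & a k = 0%N /\ (val k <= val i)%N.
Proof.
move=> zs; rewrite /r_of; case: ifP => [/existsP[k /andP[_ /eqP ak]] | _];
  last by rewrite leqNgt ltn_ord.
have [k0 vk0 ak0] := first_zero_ord ak.
by exists k0; rewrite vk0 //; split=> //; apply: ltnW.
Qed.

Lemma zero_lt_r_minimal a j k : zeros_suffix a -> (val j < r_of a)%N ->
  a j = 0%N -> a k = 0%N -> (val j <= val k)%N.
Proof.
move=> zs jr aj ak; rewrite (r_of_first_zero zs aj) ltnS in jr.
exact: leq_trans jr (first_zero_le ak).
Qed.

Lemma zeros_suffix_unitv1 : zeros_suffix (@unitv1 n).
Proof.
move=> k l kl; rewrite /unitv1; case: eqP => // k_nz _.
by case: eqP => // l0; move: kl; rewrite l0 leqn0 => /eqP.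
Qed.

Lemma zeros_suffix_step a j : zeros_suffix a -> (val j < r_of a)%N ->
  zeros_suffix (Defs.addv a (unitv j)).
Proof.
move=> zs jr k l kl /eqP.
rewrite !addv_unitvE addn_eq0 eqb0 => /andP[/eqP ak k_j].
rewrite (zs k l kl ak) add0n; apply/eqP; rewrite eqb0.
apply: contraNN k_j => /eqP lj.
subst l; rewrite eq_le; apply/andP; split; first exact: kl.
by apply: zero_lt_r_minimal (zs k j kl ak) ak.
Qed.

End ZeroSuffix.

Section Balance.
Variables (R : realFieldType) (n : nat) (y : 'I_n -> R).
Hypothesis y_ge0 : forall i, 0 <= y i.
Hypothesis y_sorted : forall k l : 'I_n, (val k <= val l)%N -> y k <= y l.
Implicit Types (a : 'I_n -> nat) (i j k l : 'I_n).

Definition balanced a := forall i j, (a j)%:R * y j <= ((a i)%:R + 1) * y i.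

Lemma infnorm_step a i : balanced a ->
  infnorm (hadam (Defs.addv a (unitv i)) y) = ((a i)%:R + 1) * y i.
Proof.
move=> bal.
have hadamE l : hadam (Defs.addv a (unitv i)) y l = (a l + (l == i))%:R * y l.
  by [].
have ge0 l : 0 <= (a l + (l == i))%:R * y l by rewrite mulr_ge0.
apply: le_anti; rewrite /infnorm; apply/andP; split.
- apply: bigmax_le => [|l _]; first by rewrite mulr_ge0 ?addr_ge0.
  rewrite hadamE ger0_norm //; case: eqVneq => [->|_]; last by rewrite addn0.
  by rewrite addn1 -natr1.
- apply: (bigmax_sup i) => //.
  by rewrite hadamE ger0_norm // eqxx addn1 natr1.
Qed.

Lemma in_M_minimal a j : balanced a -> zeros_suffix a -> in_M y a j ->
  forall i, ((a j)%:R + 1) * y j <= ((a i)%:R + 1) * y i.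
Proof.
move=> bal zs [jr j_min].
have min_r i : (val i < r_of a)%N ->
    ((a j)%:R + 1) * y j <= ((a i)%:R + 1) * y i.
  by move=> ir; rewrite -!infnorm_step //; apply: j_min.
move=> i; have [/min_r //|ri] := ltnP (val i) (r_of a).
have [k kr [ak ki]] := zero_beyond_r zs ri.
rewrite (zs k i ki ak) add0r mul1r.
by apply: le_trans (min_r k kr) _; rewrite ak add0r mul1r y_sorted.
Qed.

Lemma balanced_step a j : balanced a -> zeros_suffix a -> in_M y a j ->
  balanced (Defs.addv a (unitv j)).
Proof.
move=> bal zs jM i l; rewrite !addv_unitvE.
apply: (@le_trans _ _ (((a i)%:R + 1) * y i)); last first.
  by rewrite ler_wpM2r // lerD2r ler_nat leq_addr.
case: eqVneq => [->|_]; last by rewrite addn0.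
by rewrite addn1 -natr1; apply: in_M_minimal.
Qed.

Lemma balanced_unitv1 : balanced (@unitv1 n).
Proof.
move=> i j; apply: (@le_trans _ _ (y i)); last first.
  by rewrite -[leLHS]mul1r ler_wpM2r // lerDr.
rewrite /unitv1; case: eqP => [j0|_]; last by rewrite mul0r.
by rewrite mul1r y_sorted // j0.
Qed.

Lemma RAS_sorted_balanced B a : RAS_sorted y B a -> balanced a.
Proof.
suff : RAS_sorted y B a -> balanced a /\ zeros_suffix a by move=> /[apply] [[]].
elim=> [|{}B {}a j _ [bal zs] jM _].
  by split; [apply: balanced_unitv1 | apply: zeros_suffix_unitv1].
by split; [apply: balanced_step | apply: zeros_suffix_step; case: jM].
Qed.

End Balance.

Theorem lemmaD1 (R : realFieldType) (n : nat) (x : 'I_n -> R) (B : nat)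
  (a : 'I_n -> nat) :
  (0 < n)%N -> (forall i, 0 <= x i) -> (1 <= B)%N -> RAS x B a ->
  forall i j : 'I_n, (a j)%:R * x j <= ((a i)%:R + 1) * x i.
Proof.
move=> _ x_ge0 _ [s [b [x_sorted [ras a_b]]]] i j.
have bal := RAS_sorted_balanced (fun k => x_ge0 (s k)) x_sorted ras.
by have := bal (s^-1 i)%g (s^-1 j)%g; rewrite -!a_b !permKV.
Qed.
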